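(* Fix $n\in\mathbb{N}$ and $\delta\in\mathbb{R}$. For $\mu\in\mathbb{N}=\{1,2,\dots\}$ let $S_\mu$ be the set of pairs $(p,z)\in\mathbb{R}^n\times\mathbb{R}^n$ with $\delta>-\min_{i,j}\{p_i,z_j\}$ such that $(p+\delta)^{\mu}\succ_w (z+\delta)^{\mu}$ and $\sum_{i=1}^n (p_i+\delta)^k\geq\sum_{i=1}^n (z_i+\delta)^k$ for all $k\in\{1,\dots,\mu-1\}$. If $\mu_2>\mu_1$, then $S_{\mu_1}\subseteq S_{\mu_2}$. Consequently, increasing $\mu$ enlarges the set of rational functions $H(s)=K\prod_{i=1}^n(s-z_i)/\prod_{i=1}^n(s-p_i)$, $K>0$, with real zeros and poles that are certified logarithmically completely monotonic by the condition $(p,z)\in S_\mu$.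
   Context: $(x+\delta)^\mu$ denotes the vector with components $(x_i+\delta)^\mu$. For $x\in\mathbb{R}^n$, $x^{\downarrow}$ is the vector of its components sorted in descending order; $x\succ_w y$ means $\sum_{i=1}^k x^{\downarrow}_i\geq\sum_{i=1}^k y^{\downarrow}_i$ for all $k=1,\dots,n$. (The condition $(p,z)\in S_\mu$ for some $\mu,\delta$ is a sufficient condition for $H$ to be logarithmically completely monotonic.) *)

From mathcomp Require Import all_boot all_order all_algebra.
From mathcomp Require Import reals.
Set Implicit Arguments. Unset Strict Implicit. Unset Printing Implicit Defensive.
Import Order.TTheory GRing.Theory Num.Theory.
Local Open Scope ring_scope.

Definition sort_desc (R : realType) (n : nat) (x : 'I_n -> R) : seq R :=
  sort (fun a b : R => b <= a) [seq x i | i <- enum 'I_n].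

Definition weakly_majorizes (R : realType) (n : nat) (x y : 'I_n -> R) : Prop :=
  forall k : nat, (1 <= k <= n)%N ->
    \sum_(i < k) (sort_desc y)`_i <= \sum_(i < k) (sort_desc x)`_i.

Definition shift_pow (R : realType) (n : nat) (x : 'I_n -> R) (delta : R) (mu : nat)
  : 'I_n -> R := fun i => (x i + delta) ^+ mu.

Definition delta_ok (R : realType) (n : nat) (delta : R) (p z : 'I_n -> R) : Prop :=
  forall i : 'I_n, - p i < delta /\ - z i < delta.

Definition S_mu (R : realType) (n : nat) (delta : R) (mu : nat) (p z : 'I_n -> R) : Prop :=
  [/\ delta_ok delta p z,
      weakly_majorizes (shift_pow p delta mu) (shift_pow z delta mu) &
      forall k : nat, (1 <= k <= mu.-1)%N ->
        \sum_(i < n) (z i + delta) ^+ k <= \sum_(i < n) (p i + delta) ^+ k].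

From mathcomp Require Import all_boot all_order all_algebra.
From mathcomp Require Import reals ring zify.
Set Implicit Arguments. Unset Strict Implicit. Unset Printing Implicit Defensive.
Import Order.TTheory GRing.Theory Num.Theory.
Local Open Scope ring_scope.

(* Only the weak majorization at the larger power needs an argument: the
   power-sum conditions for the new exponents mu1 <= k < mu2 are its case of
   the full sum.  For shifted entries a_i, b_i >= 0 sorted decreasingly, the
   pointwise inequality
     (mu + k) b^k (a^mu - b^mu) <= mu (a^(mu+k) - b^(mu+k))
   reduces the claim to 0 <= sum_(i<j) b_i^k (a_i^mu - b_i^mu), which follows
   by Abel summation from the nonnegativity of the partial sums of
   a_i^mu - b_i^mu (the hypothesis) and the monotonicity of the weights b_i^k. *)

Section PowerDifferences.
Variable R : realDomainType.
Implicit Types a b : R.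

Lemma mulr_subr_subrX_ge0 a b k : 0 <= a -> 0 <= b ->
  0 <= (a - b) * (a ^+ k - b ^+ k).
Proof.
move=> a_ge0 b_ge0; have [a_le_b | b_lt_a] := leP a b.
- by apply: mulr_le0; rewrite subr_le0 //; apply: (lerXn2r k); rewrite ?nnegrE.
- have b_le_a := ltW b_lt_a.
  by apply: mulr_ge0; rewrite subr_ge0 //; apply: (lerXn2r k); rewrite ?nnegrE.
Qed.

Lemma mixed_expr_mul_subr_le a b j m : 0 <= a -> 0 <= b -> (j <= m)%N ->
  a ^+ j * b ^+ (m - j) * (a - b) <= a ^+ m * (a - b).
Proof.
move=> a_ge0 b_ge0 le_jm; rewrite -subr_ge0 -{1}(subnKC le_jm) exprD.
have -> : a ^+ j * a ^+ (m - j) * (a - b) - a ^+ j * b ^+ (m - j) * (a - b)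
   = a ^+ j * ((a - b) * (a ^+ (m - j) - b ^+ (m - j))) by ring.
by rewrite mulr_ge0 ?exprn_ge0 ?mulr_subr_subrX_ge0.
Qed.

Lemma subrX_le_mul_subr a b mu k : 0 <= a -> 0 <= b ->
  b ^+ k.+1 * (a ^+ mu - b ^+ mu) <= mu%:R * a ^+ (mu + k) * (a - b).
Proof.
move=> a_ge0 b_ge0.
have -> : mu%:R * a ^+ (mu + k) * (a - b) = \sum_(i < mu) a ^+ (mu + k) * (a - b).
  by rewrite sumr_const card_ord -mulrA mulr_natl.
rewrite subrXX !mulr_sumr; apply: ler_sum => i _.
have -> : b ^+ k.+1 * ((a - b) * (a ^+ (mu.-1 - i) * b ^+ i))
  = a ^+ (mu.-1 - i) * b ^+ (i + k.+1) * (a - b) by rewrite exprD; ring.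
have lt_i_mu := ltn_ord i.
have -> : (i + k.+1 = mu + k - (mu.-1 - i))%N by lia.
by apply: mixed_expr_mul_subr_le => //; lia.
Qed.

Lemma weighted_subrX_le_subrXD a b mu k : 0 <= a -> 0 <= b ->
  (mu + k)%:R * b ^+ k * (a ^+ mu - b ^+ mu)
    <= mu%:R * (a ^+ (mu + k) - b ^+ (mu + k)).
Proof.
move=> a_ge0 b_ge0; elim: k => [|k IHk]; first by rewrite addn0 expr0 mulr1.
have -> : (mu + k.+1)%:R * b ^+ k.+1 * (a ^+ mu - b ^+ mu)
  = b * ((mu + k)%:R * b ^+ k * (a ^+ mu - b ^+ mu))
    + b ^+ k.+1 * (a ^+ mu - b ^+ mu) by rewrite addnS mulrSr exprS; ring.
have -> : mu%:R * (a ^+ (mu + k.+1) - b ^+ (mu + k.+1))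
  = b * (mu%:R * (a ^+ (mu + k) - b ^+ (mu + k)))
    + mu%:R * a ^+ (mu + k) * (a - b) by rewrite addnS !exprS; ring.
by rewrite lerD ?ler_wpM2l ?subrX_le_mul_subr.
Qed.

Lemma abel_partial_sum_le (c d : nat -> R) k :
  (forall i, c i.+1 <= c i) ->
  (forall j, (j <= k)%N -> 0 <= \sum_(i < j) d i) ->
  c k * \sum_(i < k) d i <= \sum_(i < k) c i * d i.
Proof.
move=> c_noninc; elim: k => [|k IHk] d_psum_ge0; first by rewrite !big_ord0 mulr0.
rewrite [in X in _ <= X]big_ord_recr /=.
have le_ck : c k * \sum_(i < k.+1) d i <= \sum_(i < k) c i * d i + c k * d k.
  by rewrite big_ord_recr mulrDr lerD2r IHk // => j le_jk; rewrite d_psum_ge0 ?leqW.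
by apply: le_trans le_ck; rewrite ler_wpM2r ?d_psum_ge0.
Qed.

Lemma weak_majorization_exprn (a b : nat -> R) mu m n : (0 < mu)%N -> (mu <= m)%N ->
  (forall i, 0 <= a i) -> (forall i, 0 <= b i) -> (forall i, b i.+1 <= b i) ->
  (forall j, (j <= n)%N -> \sum_(i < j) b i ^+ mu <= \sum_(i < j) a i ^+ mu) ->
  \sum_(i < n) b i ^+ m <= \sum_(i < n) a i ^+ m.
Proof.
move=> mu_gt0 /subnKC <-; set k := (m - mu)%N.
move=> a_ge0 b_ge0 b_noninc maj_mu.
have psum_ge0 j : (j <= n)%N -> 0 <= \sum_(i < j) (a i ^+ mu - b i ^+ mu).
  by move=> le_jn; rewrite sumrB subr_ge0 maj_mu.
have weighted_ge0 : 0 <= \sum_(i < n) b i ^+ k * (a i ^+ mu - b i ^+ mu).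
  have weights_noninc i : b i.+1 ^+ k <= b i ^+ k.
    by apply: (lerXn2r k); rewrite ?nnegrE.
  apply: le_trans (abel_partial_sum_le (c := fun i => b i ^+ k)
                     (d := fun i => a i ^+ mu - b i ^+ mu) weights_noninc psum_ge0).
  by rewrite mulr_ge0 ?exprn_ge0 ?psum_ge0.
have : (mu + k)%:R * \sum_(i < n) b i ^+ k * (a i ^+ mu - b i ^+ mu)
    <= mu%:R * \sum_(i < n) (a i ^+ (mu + k) - b i ^+ (mu + k)).
  rewrite !mulr_sumr; apply: ler_sum => i _.
  by rewrite mulrA weighted_subrX_le_subrXD.
move/(le_trans (mulr_ge0 (ler0n _ _) weighted_ge0)).
by rewrite pmulr_rge0 ?ltr0n // sumrB subr_ge0.
Qed.

End PowerDifferences.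

Section SortedShifts.
Variables (R : realType) (n : nat).
Implicit Types x : 'I_n -> R.

Let sort_ge_sorted (s : seq R) : sorted >=%R (sort >=%R s).
Proof. by apply: sort_sorted; exact: ge_total. Qed.

Lemma sort_ge_map_expr (s : seq R) m : all (>= 0) s ->
  sort >=%R [seq y ^+ m | y <- s] = [seq y ^+ m | y <- sort >=%R s].
Proof.
move=> s_ge0; apply: (sorted_eq ge_trans ge_anti).
- exact: sort_ge_sorted.
- apply: (homo_sorted_in (P := [pred y | 0 <= y])).
  + by move=> y1 y2 y1_ge0 y2_ge0; apply: (lerXn2r m).
  + by rewrite all_sort.
  + exact: sort_ge_sorted.
- by rewrite perm_sort perm_map // perm_sym perm_sort.
Qed.

Lemma nth_sort_ge_ge0 (s : seq R) j : all (>= 0) s -> 0 <= (sort >=%R s)`_j.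
Proof.
move=> /allP s_ge0; have [lt_j_size | ?] := ltnP j (size (sort >=%R s)).
  by apply: s_ge0; rewrite -(mem_sort >=%R) mem_nth.
by rewrite nth_default.
Qed.

Lemma nth_sort_ge_nonincreasing (s : seq R) j : all (>= 0) s ->
  (sort >=%R s)`_j.+1 <= (sort >=%R s)`_j.
Proof.
move=> s_ge0; have [lt_Sj_size | ?] := ltnP j.+1 (size (sort >=%R s)).
  by have /(sortedP 0) := sort_ge_sorted s; apply.
by rewrite [leLHS]nth_default ?nth_sort_ge_ge0.
Qed.

Definition shift_desc x (delta : R) : seq R :=
  sort >=%R [seq x i + delta | i <- enum 'I_n].

Lemma all_shift_ge0 x delta : (forall i, 0 <= x i + delta) ->
  all (>= 0) [seq x i + delta | i <- enum 'I_n].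
Proof. by move=> x_ge0; apply/allP=> _ /mapP[i _ ->]; apply: x_ge0. Qed.

Lemma size_shift_desc x delta : size (shift_desc x delta) = n.
Proof. by rewrite size_sort size_map size_enum_ord. Qed.

Lemma sort_desc_shift_pow x delta m : (forall i, 0 <= x i + delta) ->
  sort_desc (shift_pow x delta m) = [seq y ^+ m | y <- shift_desc x delta].
Proof.
by move=> x_ge0; rewrite -sort_ge_map_expr ?all_shift_ge0 // /sort_desc -[in RHS]map_comp.
Qed.

Lemma sum_sort_desc_shift_pow x delta m k : (forall i, 0 <= x i + delta) ->
  (k <= n)%N ->
  \sum_(i < k) (sort_desc (shift_pow x delta m))`_i
    = \sum_(i < k) (shift_desc x delta)`_i ^+ m.
Proof.
move=> x_ge0 le_kn; rewrite sort_desc_shift_pow //; apply: eq_bigr => i _.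
by rewrite (nth_map 0) // size_shift_desc (leq_trans (ltn_ord i)).
Qed.

Lemma sum_shift_pow_desc x delta m :
  \sum_(i < n) (x i + delta) ^+ m = \sum_(i < n) (shift_desc x delta)`_i ^+ m.
Proof.
have -> : \sum_(i < n) (shift_desc x delta)`_i ^+ m = \sum_(y <- shift_desc x delta) y ^+ m.
  by rewrite (big_nth 0) size_shift_desc big_mkord.
by rewrite (perm_big _ (permEl (perm_sort _ _))) big_map big_enum.
Qed.

End SortedShifts.

Theorem proposition4 (R : realType) (n : nat) (delta : R) (mu1 mu2 : nat) :
  (1 <= mu1)%N -> (mu1 < mu2)%N ->
  forall p z : 'I_n -> R, S_mu delta mu1 p z -> S_mu delta mu2 p z.
Proof.
move=> mu1_gt0 lt_mu12 p z [delta_pz maj_mu1 psums].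
have p_ge0 i : 0 <= p i + delta by rewrite ltW // -ltrBlDl sub0r (delta_pz i).1.
have z_ge0 i : 0 <= z i + delta by rewrite ltW // -ltrBlDl sub0r (delta_pz i).2.
have maj m j : (mu1 <= m)%N -> (j <= n)%N ->
    \sum_(i < j) (shift_desc z delta)`_i ^+ m <= \sum_(i < j) (shift_desc p delta)`_i ^+ m.
  move=> le_mu1m le_jn; apply: (weak_majorization_exprn (a := nth 0 (shift_desc p delta))
                                   (b := nth 0 (shift_desc z delta)) mu1_gt0 le_mu1m).
  - by move=> i; rewrite nth_sort_ge_ge0 ?all_shift_ge0.
  - by move=> i; rewrite nth_sort_ge_ge0 ?all_shift_ge0.
  - by move=> i; rewrite nth_sort_ge_nonincreasing ?all_shift_ge0.
  move=> [|l] le_lj; first by rewrite !big_ord0.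
  have le_Sl_n := leq_trans le_lj le_jn.
  have := maj_mu1 l.+1 le_Sl_n.
  by rewrite (sum_sort_desc_shift_pow _ p_ge0 le_Sl_n) (sum_sort_desc_shift_pow _ z_ge0 le_Sl_n).
split=> // k.
- case/andP=> _ le_kn.
  rewrite (sum_sort_desc_shift_pow _ p_ge0 le_kn) (sum_sort_desc_shift_pow _ z_ge0 le_kn).
  exact: maj (ltnW lt_mu12) le_kn.
- case/andP=> k_gt0 _; have [lt_k_mu1 | le_mu1k] := ltnP k mu1.
    by apply: psums; rewrite k_gt0 -ltnS prednK.
  rewrite (sum_shift_pow_desc p) (sum_shift_pow_desc z).
  exact: maj le_mu1k (leqnn n).
Qed.
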